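(* Let $n\ge 2$ and let $\dot{\mathbf x}=\mathbf f(\sigma,\mathbf x)$ be a multistable regulatory system (MSRS) as defined in the context, with $f_k(\sigma,\mathbf x)=-l(x_k)+\sigma\frac{g(x_k)}{P(x_1,\dots,x_n)+h(x_k)}$; fix $\sigma>0$. Let $\mathbf r\in\mathbb R_{>0}^n$ be a non-diagonal equilibrium (i.e. not all coordinates equal) whose coordinates take the value $p$ exactly $i$ times and the value $q\ne p$ exactly $n-i$ times, where $1\le i\le\lfloor n/2\rfloor$. Let $\boldsymbol\rho=(p,\dots,p,q,\dots,q)$ be the point with $p$ in the first $i$ coordinates and $q$ in the last $n-i$ coordinates. For $k=1,\dots,n$ let $D_k(\mathbf x)=-\frac{P(\mathbf x)+h(x_k)}{l(x_k)}$, and set $$\beta=\frac{\partial f_1}{\partial x_1}(\boldsymbol\rho),\ \tau=\frac{\partial f_n}{\partial x_n}(\boldsymbol\rho),\ \gamma=\frac{\frac{\partial P}{\partial x_2}(\boldsymbol\rho)}{D_1(\boldsymbol\rho)},\ \xi=\frac{\frac{\partial P}{\partial x_{n-1}}(\boldsymbol\rho)}{D_n(\boldsymbol\rho)},\ \mu=\frac{\frac{\partial P}{\partial x_n}(\boldsymbol\rho)}{D_1(\boldsymbol\rho)},\ \nu=\frac{\frac{\partial P}{\partial x_1}(\boldsymbol\rho)}{D_n(\boldsymbol\rho)},$$ $$G_1=\tau-\xi,\quad G_2=\beta-\gamma,\quad G_3=\beta+\tau+(i-1)\gamma+(n-i-1)\xi,$$ $$G_4=\big(\beta+(i-1)\gamma\big)\big(\tau+(n-i-1)\xi\big)-i(n-i)\mu\nu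 .$$ Then $\det\left(\lambda I-J_{\mathbf f}(\mathbf r)\right)=(\lambda-G_1)^{n-i-1}(\lambda-G_2)^{i-1}\left(\lambda^2-G_3\lambda+G_4\right)$, where $J_{\mathbf f}=\left[\frac{\partial f_i}{\partial x_j}\right]$ is the Jacobian matrix with respect to $\mathbf x$.
   Context: A system of ODEs $\frac{dx_k}{dt}=f_k(\sigma,x_1,\dots,x_n)$, $k=1,\dots,n$, is called a multistable regulatory system (MSRS) if $f_k(\sigma,x_1,\dots,x_n)=-l(x_k)+\sigma\frac{g(x_k)}{P(x_1,\dots,x_n)+h(x_k)}$, where $l,g,h$ are real functions of one real variable and $P$ is a real function of $n$ real variables (all differentiable), and: (1) $\sigma$ is a positive parameter; (2) $P$ is symmetric, i.e. unchanged under interchanging any two of its arguments; (3) for every $k$ and every $(x_1,\dots,x_n)\in\mathbb R_{>0}^n$, $P(x_1,\dots,x_n)+h(x_k)>0$; (4) $l(z)\neq 0$ and for every $\sigma>0$ the function $z\mapsto \sigma\frac{g(z)}{l(z)}-h(z)$ has at most one extreme point for $z\in\mathbb R_{>0}$. For a given $\sigma$, a point $\mathbf r\in\mathbb R_{>0}^n$ is an equilibrium if $f_1(\sigma,\mathbf r)=\dots=f_n(\sigma,\mathbf r)=0$. *)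

From HB Require Import structures.
From mathcomp Require Import all_boot all_order all_algebra.
From mathcomp Require Import all_classical all_reals all_analysis.
From mathcomp Require Import fingroup perm.
Set Implicit Arguments. Unset Strict Implicit. Unset Printing Implicit Defensive.
Import Order.TTheory GRing.Theory Num.Theory.
Import numFieldNormedType.Exports.
Local Open Scope ring_scope.

Section MSRS.
Variables (R : realType) (n : nat).

Definition upd (x : 'rV[R]_n) (j : 'I_n) (t : R) : 'rV[R]_n :=
  \row_m (if m == j then t else x 0 m).

Definition partial (F : 'rV[R]_n -> R) (j : 'I_n) (x : 'rV[R]_n) : R :=
  derive1 (fun t => F (upd x j t)) (x 0 j).

Definition msrs_f (l g h : R -> R) (P : 'rV[R]_n -> R) (sigma : R)
  (k : 'I_n) (x : 'rV[R]_n) : R :=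
  - l (x 0 k) + sigma * (g (x 0 k) / (P x + h (x 0 k))).

Definition msrs_jacobian (l g h : R -> R) (P : 'rV[R]_n -> R) (sigma : R)
  (x : 'rV[R]_n) : 'M[R]_n :=
  \matrix_(k, j) partial (msrs_f l g h P sigma k) j x.

Definition msrs_D (l h : R -> R) (P : 'rV[R]_n -> R) (k : 'I_n)
  (x : 'rV[R]_n) : R :=
  - ((P x + h (x 0 k)) / l (x 0 k)).

Definition positive_point (x : 'rV[R]_n) := forall k, 0 < x 0 k.

Definition symmetric_fun (P : 'rV[R]_n -> R) :=
  forall (x : 'rV[R]_n) (a b : 'I_n), P (\row_m x 0 (tperm a b m)) = P x.

Definition extreme_point (F : R -> R) (z : R) :=
  (\forall y \near z, F y <= F z) \/ (\forall y \near z, F z <= F y).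

Definition is_MSRS (l g h : R -> R) (P : 'rV[R]_n -> R) :=
  (forall z, derivable l z 1) /\ (forall z, derivable g z 1) /\
  (forall z, derivable h z 1) /\ (forall x, differentiable P x) /\
  symmetric_fun P /\
  (forall x, positive_point x -> forall k, 0 < P x + h (x 0 k)) /\
  (forall z, 0 < z -> l z != 0) /\
      (forall sigma, 0 < sigma -> forall z1 z2, 0 < z1 -> 0 < z2 ->
         extreme_point (fun z => sigma * (g z / l z) - h z) z1 ->
         extreme_point (fun z => sigma * (g z / l z) - h z) z2 -> z1 = z2).

Definition is_equilibrium (l g h : R -> R) (P : 'rV[R]_n -> R) (sigma : R)
  (x : 'rV[R]_n) := forall k, msrs_f l g h P sigma k x = 0.

(* the ordinal with value k (default 0) *)
Definition ordn (h0 : (0 < n)%N) (k : nat) : 'I_n := insubd (Ordinal h0) k.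

End MSRS.

(* Since P is symmetric, permuting the coordinates of a point conjugates the
   Jacobian by a permutation matrix, so we may replace r by the sorted point rho.
   At an equilibrium the off-diagonal entry df_k/dx_j equals (dP/dx_j) / D_k,
   and by the symmetry of P every entry of J(rho) only depends on which of the
   two blocks {x = p}, {x = q} its row and column fall in and on whether it is
   diagonal.  lambda I - J(rho) is then a diagonal matrix minus a rank-two
   matrix, whose determinant the matrix determinant lemma
   det (D - U W) = det D * det (1 - W D^-1 U) reduces to a 2 x 2 determinant;
   two polynomials agreeing off two points are equal. *)

From HB Require Import structures.
From mathcomp Require Import all_boot all_order all_algebra.
From mathcomp Require Import all_classical all_reals all_analysis.
From mathcomp Require Import fingroup perm.
From mathcomp Require Import ring zify.
Set Implicit Arguments. Unset Strict Implicit. Unset Printing Implicit Defensive.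
Import Order.TTheory GRing.Theory Num.Theory.
Import numFieldNormedType.Exports.
Local Open Scope ring_scope.

Lemma det1_sub_mulmxC (R : comNzRingType) m k (A : 'M[R]_(m, k)) (B : 'M[R]_(k, m)) :
  \det (1%:M - A *m B) = \det (1%:M - B *m A).
Proof.
have eB : block_mx 1%:M 0 B 1%:M *m block_mx 1%:M A 0 (1%:M - B *m A)
          = block_mx 1%:M A B 1%:M.
  by rewrite mulmx_block !mul1mx !mulmx1 !mul0mx ?mulmx0 ?addr0 ?add0r addrC subrK.
have eA : block_mx (1%:M - A *m B) A 0 1%:M *m block_mx 1%:M 0 B 1%:M
          = block_mx 1%:M A B 1%:M.
  by rewrite mulmx_block !mul1mx !mulmx1 mulmx0 mul0mx !add0r subrK.
have := congr1 determinant eB; rewrite -eA !det_mulmx.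
by rewrite !det_lblock !det_ublock !det1 !mul1r !mulr1.
Qed.

Lemma det_sub_mul (R : comNzRingType) m k (D Dinv : 'M[R]_m)
    (U : 'M[R]_(m, k)) (W : 'M[R]_(k, m)) :
  D *m Dinv = 1%:M ->
  \det (D - U *m W) = \det D * \det (1%:M - W *m (Dinv *m U)).
Proof.
move=> DDinv; have -> : D - U *m W = D *m (1%:M - (Dinv *m U) *m W).
  by rewrite mulmxBr mulmx1 !mulmxA DDinv mul1mx.
by rewrite det_mulmx det1_sub_mulmxC.
Qed.

Lemma det_mx22 (R : comNzRingType) (A : 'M[R]_2) :
  \det A = A 0 0 * A 1 1 - A 0 1 * A 1 0.
Proof.
rewrite (expand_det_row _ 0) !big_ord_recl big_ord0 addr0 /cofactor !det_mx11.
rewrite !mxE /= expr0 expr1 !mul1r mulN1r mulrN.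
by congr (A _ _ * A _ _ - A _ _ * A _ _); apply: val_inj.
Qed.

Lemma det_perm_conj (R : comNzRingType) n (s : 'S_n) (A : 'M[R]_n) :
  \det (row_perm s (col_perm s A)) = \det A.
Proof.
rewrite row_permE col_permE !det_mulmx !det_perm odd_permV mulrCA.
by rewrite -signr_addb addbb expr0 mulr1.
Qed.

Lemma char_poly_perm (R : comNzRingType) n (s : 'S_n) (A : 'M[R]_n) :
  char_poly (row_perm s (col_perm s A)) = char_poly A.
Proof.
rewrite /char_poly -[RHS](det_perm_conj s); congr (\det _).
by apply/matrixP => k j; rewrite !mxE (inj_eq perm_inj).
Qed.

Lemma horner_char_poly (R : comNzRingType) n (M : 'M[R]_n) x :
  (char_poly M).[x] = \det (x%:M - M).
Proof.
rewrite /char_poly -horner_evalE -det_map_mx; congr (\det _); apply/matrixP => a b.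
by rewrite !mxE /= rmorphB rmorphMn /= !horner_evalE hornerX hornerC.
Qed.

Lemma poly_eq_except2 (R : numDomainType) (p q : {poly R}) c1 c2 :
  (forall x, x != c1 -> x != c2 -> p.[x] = q.[x]) -> p = q.
Proof.
move=> pq; pose d := (p - q) * ('X - c1%:P) * ('X - c2%:P).
have d0 : d = 0.
  apply: (@roots_geq_poly_eq0 _ _ [seq m%:R | m <- iota 0 (size d)]).
  - apply/allP => x _; rewrite /root !hornerE.
    have [-> | x1] := eqVneq x c1; first by rewrite subrr mulr0 mul0r.
    have [-> | x2] := eqVneq x c2; first by rewrite subrr mulr0.
    by rewrite pq // subrr !mul0r.
  - by rewrite map_inj_uniq ?iota_uniq // => a b /eqP; rewrite eqr_nat => /eqP.
  - by rewrite size_map size_iota.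
apply/eqP; rewrite -subr_eq0; apply/eqP; move: d0 => /eqP.
by rewrite !mulf_eq0 !polyXsubC_eq0 !orbF => /eqP.
Qed.

Lemma sum_set_if (R : nmodType) n (T : {set 'I_n}) (u v : R) :
  \sum_(k : 'I_n) (if k \in T then u else v) = u *+ #|T| + v *+ #|~: T|.
Proof.
rewrite (bigID (mem T)) /=.
rewrite [X in X + _](eq_bigr (fun _ => u)) => [|k ->] //.
rewrite [X in _ + X](eq_bigr (fun _ => v)) => [|k /negPf ->] //.
by rewrite !sumr_const; congr (_ *+ _ + _ *+ _); apply: eq_card => k; rewrite !inE.
Qed.

Lemma prod_set_if (R : comNzRingType) n (T : {set 'I_n}) (u v : R) :
  \prod_(k : 'I_n) (if k \in T then u else v) = u ^+ #|T| * v ^+ #|~: T|.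
Proof.
rewrite (bigID (mem T)) /=.
rewrite [X in X * _](eq_bigr (fun _ => u)) => [|k ->] //.
rewrite [X in _ * X](eq_bigr (fun _ => v)) => [|k /negPf ->] //.
by rewrite !prodr_const; congr (_ ^+ _ * _ ^+ _); apply: eq_card => k; rewrite !inE.
Qed.

Section TwoBlockMatrix.
Variables (R : numFieldType) (n : nat) (T : {set 'I_n}) (M : 'M[R]_n).
Variables (be ta ga mu nu xi : R).
Hypothesis M_diag : forall k, M k k = if k \in T then be else ta.
Hypothesis M_offdiag : forall k j, k != j ->
  M k j = if k \in T then (if j \in T then ga else mu)
          else (if j \in T then nu else xi).

(* [x%:M - M] is diagonal minus a rank-two matrix, so the determinant lemma
   [det_sub_mul] reduces it to a 2 x 2 determinant. *)
Lemma det_two_block x : x != be - ga -> x != ta - xi ->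
  let a := x - (be - ga) in let b := x - (ta - xi) in
  \det (x%:M - M) = a ^+ #|T| * b ^+ #|~: T| *
    ((1 - #|T|%:R * ga / a) * (1 - #|~: T|%:R * xi / b)
     - #|T|%:R * #|~: T|%:R * mu * nu / (a * b)).
Proof.
move=> xa xb a b; have a0 : a != 0 by rewrite subr_eq0.
have b0 : b != 0 by rewrite subr_eq0.
pose e k := if k \in T then a else b.
pose U : 'M[R]_(n, 2) :=
  \matrix_(k, c) (if c == 0 then (k \in T)%:R else (k \notin T)%:R).
pose W : 'M[R]_(2, n) := \matrix_(c, j)
  (if c == 0 then (if j \in T then ga else mu) else (if j \in T then nu else xi)).
have -> : x%:M - M = diag_mx (\row_k e k) - U *m W.
  apply/matrixP => k j; rewrite !mxE !big_ord_recl big_ord0 !mxE /= /e.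
  have [<- | kj] := eqVneq k j; rewrite ?M_diag ?M_offdiag //.
    by case: (k \in T); rewrite /a /b /=; ring.
  by case: (k \in T); case: (j \in T); rewrite /= ?mulr0n; ring.
have DDinv : diag_mx (\row_k e k) *m diag_mx (\row_k (e k)^-1) = 1%:M.
  apply/matrixP => k j; rewrite mul_diag_mx !mxE.
  have [-> | _] := eqVneq k j; rewrite ?mulr0n ?mulr0 // mulr1n divff /e //.
  by case: ifP.
have WVE : W *m (diag_mx (\row_k (e k)^-1) *m U) = \matrix_(c, d)
    ((if c == 0 then (if d == 0 then ga else mu) else (if d == 0 then nu else xi))
     * (if d == 0 then #|T|%:R / a else #|~: T|%:R / b)).
  apply/matrixP => c d; rewrite !mxE.
  under eq_bigr => j _ do rewrite mul_diag_mx !mxE.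
  rewrite (eq_bigr (fun j => if j \in T then
      (if c == 0 then ga else nu) * (a^-1 * (d == 0)%:R)
      else (if c == 0 then mu else xi) * (b^-1 * (d != 0)%:R))); last first.
    by move=> j _; rewrite /e; case: (j \in T); case: (d == 0).
  rewrite sum_set_if.
  by case: (d == 0); rewrite ?mulr1 ?mulr0 ?mul0rn ?addr0 ?add0r -mulrnAr mulr_natl.
rewrite (det_sub_mul U W DDinv) det_diag det_mx22 WVE (eq_bigr e) => [|k _]; last first.
  by rewrite mxE.
rewrite prod_set_if !mxE /=; congr (_ * _).
by field; rewrite a0 b0.
Qed.

Lemma char_poly_two_block : (0 < #|T|)%N -> (0 < #|~: T|)%N ->
  char_poly M = ('X - (ta - xi)%:P) ^+ (#|~: T| - 1) * ('X - (be - ga)%:P) ^+ (#|T| - 1)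
    * ('X ^+ 2 - (be + ta + (#|T| - 1)%:R * ga + (#|~: T| - 1)%:R * xi) *: 'X
       + ((be + (#|T| - 1)%:R * ga) * (ta + (#|~: T| - 1)%:R * xi)
          - (#|T| * #|~: T|)%:R * mu * nu)%:P).
Proof.
move=> T_gt0 TC_gt0; apply: (@poly_eq_except2 _ _ _ (be - ga) (ta - xi)) => x xa xb.
rewrite horner_char_poly det_two_block // !hornerE.
have : x - (be - ga) != 0 by rewrite subr_eq0.
have : x - (ta - xi) != 0 by rewrite subr_eq0.
rewrite -(prednK T_gt0) -(prednK TC_gt0) !subn1 /= natrM.
move: #|T|.-1 #|~: T|.-1 => t c b0 a0.
rewrite !exprS !mulrS.
by field; rewrite a0 b0.
Qed.
End TwoBlockMatrix.

Lemma card_set_ltn n i : (i <= n)%N -> #|[set k : 'I_n | (k < i)%N]| = i.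
Proof.
move=> le_in.
have -> : [set k : 'I_n | (k < i)%N] = widen_ord le_in @: [set: 'I_i].
  apply/setP => k; rewrite inE; apply/idP/imsetP => [ki | [j _ ->]].
    by exists (Ordinal ki); rewrite ?inE //; apply: val_inj.
  exact: (ltn_ord j).
by rewrite card_imset ?cardsT ?card_ord // => a b /(congr1 val) ab; apply: val_inj.
Qed.

Lemma setC_card_eq (A : finType) (T Q : {set A}) :
  Q \subset ~: T -> (#|T| + #|Q|)%N = #|A| -> Q = ~: T.
Proof.
move=> QT cardTQ; apply/eqP; rewrite eqEcard QT /=.
by have := cardsC T; rewrite -cardTQ => /eqP; rewrite eqn_add2l => /eqP ->.
Qed.

Lemma perm_sort_set n (T : {set 'I_n}) :
  exists s : 'S_n, forall k, (s k \in T) = (k < #|T|)%N.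
Proof.
pose e := enum T ++ enum (~: T).
have size_e : size e = n by rewrite size_cat -!cardE cardsC card_ord.
have uniq_e : uniq e.
  rewrite cat_uniq !enum_uniq andbT /=; apply/hasPn => x.
  by rewrite !mem_enum inE.
have inj_e : injective (fun k : 'I_n => nth k e k).
  move=> a b; rewrite (set_nth_default a b) ?size_e // => /eqP.
  by rewrite nth_uniq ?size_e // => /eqP /val_inj.
exists (perm inj_e) => k; rewrite permE nth_cat cardE.
case: ltnP => [kT | Tk]; first by rewrite -mem_enum mem_nth.
have kTC : (k - size (enum T) < size (enum (~: T)))%N.
  by rewrite ltn_subLR // -size_cat size_e.
by have := mem_nth k kTC; rewrite mem_enum inE => /negPf.
Qed.

Lemma val_ordn n (h0 : (0 < n)%N) k : (k < n)%N -> val (ordn h0 k) = k.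
Proof. by move=> kn; rewrite /ordn val_insubd kn. Qed.

Lemma eq_ordn n (h0 : (0 < n)%N) k m : (k < n)%N -> (m < n)%N ->
  (ordn h0 k == ordn h0 m) = (k == m).
Proof. by move=> kn mn; rewrite -val_eqE !val_ordn. Qed.

Section PermRow.
Variables (T : Type) (n : nat).
Implicit Types (x : 'rV[T]_n) (s : 'S_n).

Definition perm_row x s : 'rV[T]_n := \row_k x 0 (s k).

Lemma perm_rowE x s k : perm_row x s 0 k = x 0 (s k).
Proof. exact: mxE. Qed.

Lemma perm_row1 x : perm_row x 1 = x.
Proof. by apply/rowP => k; rewrite mxE perm1. Qed.

Lemma perm_rowM x s1 s2 : perm_row x (s1 * s2) = perm_row (perm_row x s2) s1.
Proof. by apply/rowP => k; rewrite !mxE permM. Qed.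

Lemma perm_row_tperm x a b : x 0 a = x 0 b -> perm_row x (tperm a b) = x.
Proof. by move=> xab; apply/rowP => k; rewrite perm_rowE; case: tpermP => // ->. Qed.
End PermRow.

Lemma sort_two_valued_row (T : eqType) n (r : 'rV[T]_n) p q i : p != q ->
  #|[set k | r 0 k == p]| = i -> #|[set k | r 0 k == q]| = (n - i)%N -> (i <= n)%N ->
  exists s : 'S_n, \row_k (if (k < i)%N then p else q) = perm_row r s.
Proof.
set A := [set k | r 0 k == p] => pq cardA cardQ le_in.
have QA : [set k | r 0 k == q] = ~: A.
  apply: setC_card_eq; last by rewrite cardA cardQ card_ord subnKC.
  by apply/fintype.subsetP => k; rewrite !inE => /eqP ->; rewrite eq_sym.
have [s sA] := perm_sort_set A; exists s; apply/rowP => k.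
rewrite perm_rowE mxE -cardA -sA; case: ifP; first by rewrite inE => /eqP.
by move/negbT; rewrite -finset.in_setC -QA inE => /eqP.
Qed.

Section Partial.
Variables (R : realType) (n : nat).
Implicit Types (x : 'rV[R]_n) (s : 'S_n) (F P : 'rV[R]_n -> R).

Lemma upd_same x j : upd x j (x 0 j) = x.
Proof. by apply/rowP => m; rewrite mxE; case: eqP => [->|]. Qed.

Lemma upd_differentiable x j t : differentiable (upd x j) t.
Proof.
have -> : upd x j = fun u => upd x j 0 + u *: \row_m ((m == j)%:R : R).
  apply/funext => u; apply/rowP => m; rewrite !mxE.
  by case: eqP => _; rewrite ?mulr1 ?mulr0 ?add0r ?addr0.
exact: differentiableD.
Qed.

Lemma derivable_upd F x j : (forall y, differentiable F y) ->
  derivable (fun t => F (upd x j t)) (x 0 j) 1.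
Proof.
move=> dF; apply: diff_derivable.
exact: (differentiable_comp (upd_differentiable x j (x 0 j)) (dF _)).
Qed.

Lemma symmetric_fun_perm P : symmetric_fun P -> forall x s, P (perm_row x s) = P x.
Proof.
move=> sP x s; have [ts -> _] := prod_tpermP s; elim: ts => [|t ts IH].
  by rewrite big_nil perm_row1.
by rewrite big_cons perm_rowM -IH; apply: sP.
Qed.

Lemma upd_perm_row x s j t : upd (perm_row x s) j t = perm_row (upd x (s j) t) s.
Proof. by apply/rowP => k; rewrite !mxE (inj_eq perm_inj). Qed.

Lemma partial_perm_row F j x s :
  partial F j (perm_row x s) = partial (fun y => F (perm_row y s)) (s j) x.
Proof.
rewrite /partial perm_rowE; congr (derive1 _ _); apply/funext => t.
by rewrite upd_perm_row.
Qed.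

Lemma partial_sym_eq P x a b : symmetric_fun P -> x 0 a = x 0 b ->
  partial P a x = partial P b x.
Proof.
move=> sP xab; rewrite -{1}(perm_row_tperm xab) partial_perm_row tpermL.
by congr partial; apply/funext => y; apply: symmetric_fun_perm.
Qed.
End Partial.

Section Jacobian.
Variables (R : realType) (n : nat) (l g h : R -> R) (P : 'rV[R]_n -> R) (sigma : R).
Implicit Types (x : 'rV[R]_n) (s : 'S_n).
Local Notation f := (msrs_f l g h P sigma).
Local Notation J := (msrs_jacobian l g h P sigma).
Hypothesis P_sym : symmetric_fun P.
Hypothesis P_diff : forall x, differentiable P x.

Lemma msrs_f_perm_row k x s : f k (perm_row x s) = f (s k) x.
Proof. by rewrite /msrs_f symmetric_fun_perm // perm_rowE. Qed.

Lemma msrs_jacobian_perm_row x s : J (perm_row x s) = row_perm s (col_perm s (J x)).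
Proof.
apply/matrixP => k j; rewrite !mxE partial_perm_row.
by have -> : (fun y => f k (perm_row y s)) = f (s k) by apply/funext => y; apply: msrs_f_perm_row.
Qed.

Lemma is_equilibrium_perm_row x s :
  is_equilibrium l g h P sigma x -> is_equilibrium l g h P sigma (perm_row x s).
Proof. by move=> eqx k; rewrite msrs_f_perm_row. Qed.

Lemma positive_point_perm_row x s : positive_point x -> positive_point (perm_row x s).
Proof. by move=> xpos k; rewrite perm_rowE. Qed.

Lemma partial_msrs_f_offdiag x k j : k != j -> P x + h (x 0 k) != 0 ->
  partial (f k) j x = - (sigma * g (x 0 k) * partial P j x) / (P x + h (x 0 k)) ^+ 2.
Proof.
move=> kj Ph0; rewrite /partial; set c := x 0 k; set Q := fun t => P (upd x j t) + h c.
have -> : (fun t => f k (upd x j t)) = cst (- l c) + (sigma * g c) \*: (fun t => (Q t)^-1).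
  by apply/funext => t; rewrite /msrs_f /= /upd mxE (negPf kj) mulrA.
have Qx : Q (x 0 j) = P x + h c by rewrite /Q upd_same.
have dQ : derivable Q (x 0 j) 1.
  by apply: derivableD; [apply: derivable_upd | apply: derivable_cst].
have Q0 : Q (x 0 j) != 0 by rewrite Qx.
have dV := derivableV Q0 dQ.
rewrite derive1E deriveD //; last exact: derivableZ.
rewrite derive_cst add0r deriveZ // deriveV // deriveD //; last exact: derivable_upd.
rewrite derive_cst addr0 -derive1E Qx.
by rewrite /GRing.scale /=; ring.
Qed.

(* At an equilibrium [sigma g(x_k) = l(x_k) (P(x) + h(x_k))], which turns the
   off-diagonal entries into [dP/dx_j / D_k]. *)
Lemma msrs_jacobian_offdiag x k j : k != j -> l (x 0 k) != 0 ->
  P x + h (x 0 k) != 0 -> f k x = 0 ->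
  J x k j = partial P j x / msrs_D l h P k x.
Proof.
move=> kj l0 Ph0 fk0; rewrite mxE partial_msrs_f_offdiag //.
have gE : sigma * g (x 0 k) = l (x 0 k) * (P x + h (x 0 k)).
  move: fk0 => /eqP; rewrite /msrs_f addrC subr_eq0 mulrA => /eqP.
  by move/(congr1 (fun y => y * (P x + h (x 0 k)))); rewrite divfK.
by rewrite /msrs_D gE; field; rewrite l0 Ph0.
Qed.

Hypothesis l_neq0 : forall z, 0 < z -> l z != 0.
Hypothesis denom_pos : forall y, positive_point y -> forall k, 0 < P y + h (y 0 k).

Section Equilibrium.
Variable x : 'rV[R]_n.
Hypotheses (x_pos : positive_point x) (x_eq : is_equilibrium l g h P sigma x).

Lemma equilibrium_jacobian_offdiag k j : k != j ->
  J x k j = partial P j x / msrs_D l h P k x.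
Proof.
move=> kj; apply: msrs_jacobian_offdiag => //; first exact: l_neq0.
exact/lt0r_neq0/denom_pos.
Qed.

Lemma msrs_jacobian_entry_eq k j k' j' :
  x 0 k = x 0 k' -> x 0 j = x 0 j' -> (k == j) = (k' == j') -> J x k j = J x k' j'.
Proof.
move=> xk xj; have [<- /esym/eqP <- | kj kj'] := eqVneq k j.
  by rewrite -{1}(perm_row_tperm xk) msrs_jacobian_perm_row !mxE tpermL.
rewrite !equilibrium_jacobian_offdiag -?kj' // (partial_sym_eq P_sym xj).
by rewrite /msrs_D xk.
Qed.
End Equilibrium.
End Jacobian.

Section SortedPoint.
Variables (R : realType) (n : nat) (hn : (2 <= n)%N).
Variables (l g h : R -> R) (P : 'rV[R]_n -> R) (sigma p q : R) (i : nat).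
Hypotheses (P_sym : symmetric_fun P) (P_diff : forall x, differentiable P x).
Hypothesis l_neq0 : forall z, 0 < z -> l z != 0.
Hypothesis denom_pos : forall y, positive_point y -> forall k, 0 < P y + h (y 0 k).
Hypotheses (i_gt0 : (0 < i)%N) (i_lt_n : (i < n)%N).
Let rho : 'rV[R]_n := \row_k (if (k < i)%N then p else q).
Hypotheses (rho_pos : positive_point rho) (rho_eq : is_equilibrium l g h P sigma rho).
Let o := ordn (ltnW hn).
Local Notation J := (msrs_jacobian l g h P sigma rho).

Let rho_eq_ordn (k : 'I_n) m : (m < n)%N -> (k < i)%N = (m < i)%N -> rho 0 k = rho 0 (o m).
Proof. by move=> mn ki; rewrite !mxE val_ordn // ki. Qed.

Let Jeq := msrs_jacobian_entry_eq P_sym P_diff l_neq0 denom_pos rho_pos rho_eq.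

Lemma sorted_jacobian_diag k :
  J k k = if (k < i)%N then J (o 0) (o 0) else J (o (n - 1)) (o (n - 1)).
Proof. by case: ltnP => ki; apply: Jeq; rewrite ?eqxx //; apply: rho_eq_ordn; lia. Qed.

Lemma sorted_jacobian_offdiag k j : k != j ->
  J k j = if (k < i)%N then (if (j < i)%N then J (o 0) (o 1) else J (o 0) (o (n - 1)))
          else (if (j < i)%N then J (o (n - 1)) (o 0) else J (o (n - 1)) (o (n - 2))).
Proof.
move=> kj; have kj' : (k : nat) != j by [].
have kn := ltn_ord k; have jn := ltn_ord j.
case: (ltnP k i) => ki; case: (ltnP j i) => ji; apply: Jeq;
  by [apply: rho_eq_ordn; lia | rewrite (negPf kj) eq_ordn //; lia].
Qed.

Lemma sorted_partial_div m m' : (m < n)%N -> (m' < n)%N -> m != m' ->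
  partial P (o m') rho / msrs_D l h P (o m) rho = J (o m) (o m').
Proof. by move=> mn m'n mm'; rewrite equilibrium_jacobian_offdiag // eq_ordn. Qed.
End SortedPoint.

Theorem theorem4 (R : realType) (n : nat) (hn : (2 <= n)%N)
  (l g h : R -> R) (P : 'rV[R]_n -> R) (sigma : R)
  (hMSRS : is_MSRS l g h P) (hsigma : 0 < sigma)
  (r : 'rV[R]_n) (p q : R) (i : nat)
  (hr_pos : positive_point r) (hr_eq : is_equilibrium l g h P sigma r)
  (hpq : p != q)
  (hi1 : (1 <= i)%N) (hi2 : (i <= n./2)%N)
  (hcard_p : #|[set k : 'I_n | r 0 k == p]| = i)
  (hcard_q : #|[set k : 'I_n | r 0 k == q]| = (n - i)%N) :
  let rho : 'rV[R]_n := \row_k (if (k < i)%N then p else q) in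
  let o := ordn (ltnW hn) in
  let beta := partial (msrs_f l g h P sigma (o 0%N)) (o 0%N) rho in
  let tau := partial (msrs_f l g h P sigma (o (n - 1)%N)) (o (n - 1)%N) rho in
  let gamma := partial P (o 1%N) rho / msrs_D l h P (o 0%N) rho in
  let xi := partial P (o (n - 2)%N) rho / msrs_D l h P (o (n - 1)%N) rho in
  let mu := partial P (o (n - 1)%N) rho / msrs_D l h P (o 0%N) rho in
  let nu := partial P (o 0%N) rho / msrs_D l h P (o (n - 1)%N) rho in
  let G1 := tau - xi in
  let G2 := beta - gamma in
  let G3 := beta + tau + (i - 1)%:R * gamma + (n - i - 1)%:R * xi in
  let G4 := (beta + (i - 1)%:R * gamma) * (tau + (n - i - 1)%:R * xi)
            - (i * (n - i))%:R * mu * nu in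
  char_poly (msrs_jacobian l g h P sigma r)
  = ('X - G1%:P) ^+ (n - i - 1) * ('X - G2%:P) ^+ (i - 1)
    * ('X ^+ 2 - G3 *: 'X + G4%:P).
Proof.
move=> rho o beta tau gamma xi mu nu G1 G2 G3 G4.
have [_ [_ [_ [P_diff [P_sym [denom_pos [l_neq0 _]]]]]]] := hMSRS.
have i_lt_n : (i < n)%N by move: hi2; rewrite geq_half_double -addnn; lia.
have [s rho_r] : exists s, rho = perm_row r s.
  exact: sort_two_valued_row hpq hcard_p hcard_q (ltnW i_lt_n).
have rho_pos : positive_point rho by rewrite rho_r; apply: positive_point_perm_row.
have rho_eq : is_equilibrium l g h P sigma rho.
  by rewrite rho_r; apply: is_equilibrium_perm_row.
have JE := sorted_partial_div hn P_diff l_neq0 denom_pos rho_pos rho_eq.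
have Jdiag := sorted_jacobian_diag hn P_sym P_diff l_neq0 denom_pos hi1 i_lt_n rho_pos rho_eq.
have Joff := sorted_jacobian_offdiag hn P_sym P_diff l_neq0 denom_pos hi1 i_lt_n rho_pos rho_eq.
set T := [set k : 'I_n | (k < i)%N].
have cardT : #|T| = i := card_set_ltn (ltnW i_lt_n).
have cardTC : #|~: T| = (n - i)%N by have := cardsC T; rewrite cardT card_ord; lia.
rewrite -(char_poly_perm s) -msrs_jacobian_perm_row // -rho_r.
rewrite /G1 /G2 /G3 /G4 -cardTC -cardT.
apply: char_poly_two_block => [k | k j kj | | ].
- by rewrite Jdiag /beta /tau !inE !mxE.
- by rewrite Joff // !inE /gamma /xi /mu /nu !JE //; lia.
- by rewrite cardT.
- by rewrite cardTC subn_gt0.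
Qed.
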